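(* For arbitrary positive integers $m$ and $n$, there exist a finite alphabet $A$, a letter $a\in A$, and languages $K,L\subseteq A^*$ whose syntactic monoids $M$ and $N$ satisfy $|M|=m$ and $|N|=n$, such that, taking $\varphi:A^*\to M$, $u\mapsto u{\sim}_K$ and $\psi:A^*\to N$, $u\mapsto u{\sim}_L$ to be the syntactic homomorphisms, the mapping $\mu_a:A^*\to M\Diamond N$ is surjective.
   Context: The syntactic congruence of $R\subseteq A^*$ is $u\sim_R v$ iff for all $p,q\in A^*$, $puq\in R\Leftrightarrow pvq\in R$; the syntactic monoid is $A^*/{\sim_R}$. For finite monoids $M,N$, the Schützenberger product $M\Diamond N$ is the set of $2\times2$ matrices $P$ with $P_{1,1}\in M$, $P_{2,2}\in N$, $P_{2,1}=\emptyset$, $P_{1,2}\subseteq M\times N$, with multiplication $(PQ)_{1,1}=P_{1,1}Q_{1,1}$, $(PQ)_{2,2}=P_{2,2}Q_{2,2}$, $(PQ)_{1,2}=\{(P_{1,1}x,y)\mid (x,y)\in Q_{1,2}\}\cup\{(z,tQ_{2,2})\mid (z,t)\in P_{1,2}\}$. Given homomorphisms $\varphi:A^*\to M$, $\psi:A^*\to N$ and $a\in A$, the homomorphism $\mu_a:A^*\to M\Diamond N$ is defined by $(\mu_a(u))_{1,1}=\varphi(u)$, $(\mu_a(u))_{2,2}=\psi(u)$, $(\mu_a(u))_{1,2}=\{(\varphi(u'),\psi(u''))\mid u=u'au'',\ u',u''\in A^*\}$. *)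

From mathcomp Require Import all_boot.
Set Implicit Arguments. Unset Strict Implicit. Unset Printing Implicit Defensive.

Definition lang (A : finType) := seq A -> Prop.

Definition synt_equiv (A : finType) (R : lang A) (u v : seq A) : Prop :=
  forall p q : seq A, R (p ++ u ++ q) <-> R (p ++ v ++ q).

Definition synt_class (A : finType) (R : lang A) (u : seq A) : seq A -> Prop :=
  fun v => synt_equiv R u v.

Definition synt_monoid (A : finType) (R : lang A) : Type :=
  {C : seq A -> Prop | exists u, C = synt_class R u}.

Definition synt_hom (A : finType) (R : lang A) (u : seq A) : synt_monoid R :=
  exist _ (synt_class R u) (ex_intro _ u erefl).

Definition has_card (T : Type) (k : nat) : Prop :=
  exists f : 'I_k -> T, bijective f.

(* Elements of the Schützenberger product M <> N: 2x2 matrices with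
   (1,1) in M, (2,2) in N, (2,1) empty, (1,2) a subset of M x N. *)
Record schutz (M N : Type) := Schutz {
  s11 : M;
  s22 : N;
  s12 : M * N -> Prop }.

(* Its multiplication (for reference; mu_a below is a homomorphism for it). *)
Definition schutz_mul (M N : Type) (mulM : M -> M -> M) (mulN : N -> N -> N)
  (P Q : schutz M N) : schutz M N :=
  Schutz (mulM (s11 P) (s11 Q)) (mulN (s22 P) (s22 Q))
    (fun z => (exists x y, s12 Q (x, y) /\ z = (mulM (s11 P) x, y))
           \/ (exists x t, s12 P (x, t) /\ z = (x, mulN t (s22 Q)))).

Definition mu (A : finType) (M N : Type) (phi : seq A -> M) (psi : seq A -> N)
  (a : A) (u : seq A) : schutz M N :=
  Schutz (phi u) (psi u)
    (fun z => exists u' u'', u = u' ++ a :: u'' /\ z = (phi u', psi u'')).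

From mathcomp Require Import all_boot all_algebra.
From Stdlib Require Import Classical ClassicalEpsilon FunctionalExtensionality
  PropExtensionality ProofIrrelevance.
Set Implicit Arguments. Unset Strict Implicit. Unset Printing Implicit Defensive.
Import GRing.Theory.

(* Take M = Z_m and N = Z_n, and the alphabet (Z_m x Z_n) + {a}, where the
   letter (g, h) weighs g in M and h in N and the marker a weighs nothing.
   K (resp. L) is the set of words of M-weight (resp. N-weight) zero; as the
   weights live in groups, two words are syntactically equivalent iff they
   have the same weight, so the syntactic monoids are Z_m and Z_n.  A word
   b_0 a b_1 a ... a b_k has the marked factorisations
   (b_0 + ... + b_(i-1), b_i + ... + b_k), and since weights can be cancelled
   the letters b_i can be chosen one after the other so as to realise any
   finite set of such pairs together with any prescribed total weights. *)

Section Syntactic.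
Variables (A : finType) (R : lang A).

Lemma synt_homP u v : synt_hom R u = synt_hom R v <-> synt_equiv R u v.
Proof.
split=> [/(f_equal (@proj1_sig _ _)) /= Euv | Euv].
  by have : synt_class R v v by []; rewrite -Euv.
apply: subset_eq_compat; apply: functional_extensionality => w.
apply: propositional_extensionality; split=> Ew p q.
- exact: iff_trans (iff_sym (Euv p q)) (Ew p q).
- exact: iff_trans (Euv p q) (Ew p q).
Qed.

Lemma synt_hom_surj (x : synt_monoid R) : exists u, synt_hom R u = x.
Proof. by case: x => C [u Cu]; exists u; apply: subset_eq_compat. Qed.

End Syntactic.

Lemma has_card_inj_surj (T : Type) (k : nat) (f : 'I_k -> T) :
  injective f -> (forall t, exists i, f i = t) -> has_card T k.
Proof.
move=> f_inj f_surj; exists f.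
exists (fun t => proj1_sig (constructive_indefinite_description _ (f_surj t))).
- by move=> i; apply: f_inj; case: constructive_indefinite_description.
- by move=> t; case: constructive_indefinite_description.
Qed.

Lemma exists_seq_pred (T : finType) (S : T -> Prop) :
  exists s : seq T, forall z, z \in s <-> S z.
Proof.
have seq_sub (e : seq T) : exists s : seq T, forall z, z \in s <-> z \in e /\ S z.
  elim: e => [|y e [s Hs]]; first by exists [::] => z; rewrite in_nil; split=> [|[]].
  have [Sy | nSy] := classic (S y).
    exists (y :: s) => z; rewrite !in_cons; split.
    - by case/orP=> [/eqP -> | /Hs [-> Sz]]; rewrite ?eqxx ?orbT.
    - by case=> /orP [/eqP -> | ze] Sz; rewrite ?eqxx //; apply/orP; right; apply/Hs.
  exists s => z; rewrite in_cons; split.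
  - by case/Hs=> ze Sz; rewrite ze orbT.
  - by case=> /orP [/eqP -> | ze] Sz //; apply/Hs.
have [s Hs] := seq_sub (enum T).
by exists s => z; split=> [/Hs [] | Sz] //; apply/Hs; rewrite mem_enum.
Qed.

Section KernelLanguage.
Variables (A : finType) (G : zmodType) (w : seq A -> G) (word : G -> seq A).
Local Open Scope ring_scope.
Hypothesis w_cat : forall u v, w (u ++ v) = w u + w v.
Hypothesis wordK : cancel word w.

Definition ker_lang : lang A := fun u => w u = 0.

Lemma synt_equiv_ker u v : synt_equiv ker_lang u v <-> w u = w v.
Proof.
split=> [Euv | Euv p q]; last by rewrite /ker_lang !w_cat Euv.
have := (Euv [::] (word (- w u))).1.
rewrite /ker_lang /= !w_cat wordK subrr => /(_ erefl) /eqP.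
by rewrite subr_eq0 eq_sym => /eqP.
Qed.

Definition ker_class (g : G) : synt_monoid ker_lang := synt_hom ker_lang (word g).

Lemma synt_hom_ker u : synt_hom ker_lang u = ker_class (w u).
Proof. by apply/synt_homP/synt_equiv_ker; rewrite wordK. Qed.

Lemma ker_class_inj : injective ker_class.
Proof. by move=> g h /synt_homP /synt_equiv_ker; rewrite !wordK. Qed.

Lemma ker_class_surj x : exists g, ker_class g = x.
Proof. by have [u <-] := synt_hom_surj x; exists (w u); rewrite synt_hom_ker. Qed.

Lemma has_card_synt_ker k : has_card G k -> has_card (synt_monoid ker_lang) k.
Proof.
case=> f [f' fK f'K]; apply: (has_card_inj_surj (f := ker_class \o f)).
  exact: inj_comp ker_class_inj (can_inj fK).
by move=> x; have [g <-] := ker_class_surj x; exists (f' g); rewrite /= f'K.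
Qed.

End KernelLanguage.

Section MarkedLetters.
Variables G H : finZmodType.
Local Notation A := (option (G * H)).
Local Open Scope ring_scope.

Definition sumG (u : seq A) : G := \sum_(c <- u) oapp fst 0 c.
Definition sumH (u : seq A) : H := \sum_(c <- u) oapp snd 0 c.
Definition letterG (g : G) : seq A := [:: Some (g, 0)].
Definition letterH (h : H) : seq A := [:: Some (0, h)].

Lemma sumG_cons c u : sumG (c :: u) = oapp fst 0 c + sumG u.
Proof. exact: big_cons. Qed.
Lemma sumH_cons c u : sumH (c :: u) = oapp snd 0 c + sumH u.
Proof. exact: big_cons. Qed.
Lemma sumG_cat u v : sumG (u ++ v) = sumG u + sumG v.
Proof. exact: big_cat. Qed.
Lemma sumH_cat u v : sumH (u ++ v) = sumH u + sumH v.
Proof. exact: big_cat. Qed.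
Lemma letterGK : cancel letterG sumG.
Proof. by move=> g; rewrite /sumG big_seq1. Qed.
Lemma letterHK : cancel letterH sumH.
Proof. by move=> h; rewrite /sumH big_seq1. Qed.

Local Notation classG := (ker_class sumG letterG).
Local Notation classH := (ker_class sumH letterH).

Definition factors (u : seq A) (z : G * H) : Prop :=
  exists u' u'', u = u' ++ None :: u'' /\ z = (sumG u', sumH u'').

Lemma factors_nil z : ~ factors [::] z.
Proof. by case=> [[|? ?] [? []]]. Qed.

Lemma factors_cons_some c u z :
  factors (Some c :: u) z <-> exists2 z', factors u z' & z = (c.1 + z'.1, z'.2).
Proof.
split=> [[[|d u'] [u'' [//= [<- ->] ->]]] | [_ [u' [u'' [-> ->]]] ->]].
  by exists (sumG u', sumH u''); [exists u', u'' | rewrite sumG_cons].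
by exists (Some c :: u'), u''; rewrite sumG_cons.
Qed.

Lemma factors_cons_none u z :
  factors (None :: u) z <-> z = (0, sumH u) \/ factors u z.
Proof.
split=> [[[|d u'] [u'' [[<-] ->]]] | [-> | [u' [u'' [-> ->]]]]].
- by left; rewrite /sumG big_nil.
- by move=> ->; right; exists u', u''; rewrite sumG_cons add0r.
- by exists [::], u; rewrite /sumG big_nil.
- by exists (None :: u'), u''; rewrite sumG_cons add0r.
Qed.

Lemma factors_realize (s : seq (G * H)) (X : G) (Y : H) :
  exists u, [/\ sumG u = X, sumH u = Y & forall z, factors u z <-> z \in s].
Proof.
have [k] := ubnP (size s); elim: k s X Y => // k IH [|[x y] s] X Y /= s_lt.
  exists [:: Some (X, Y)]; rewrite /sumG /sumH !big_seq1; split=> // z.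
  by rewrite factors_cons_some; split=> // -[? /factors_nil].
(* The leading letter adds x to the first component of every later factor. *)
have [u [uX uY us]] :=
  IH [seq (z.1 - x, z.2) | z <- s] (X - x) y ltac:(by rewrite size_map).
exists (Some (x, Y - y) :: None :: u).
split; first by rewrite !sumG_cons /= uX add0r addrC subrK.
  by rewrite !sumH_cons /= uY add0r subrK.
move=> z; rewrite factors_cons_some in_cons; split.
- case=> z' /factors_cons_none [-> | /us /mapP [z1 z1s ->]] ->.
    by rewrite addr0 uY eqxx.
  by rewrite /= addrC subrK -surjective_pairing z1s orbT.
- case/orP=> [/eqP -> | zs].
    by exists (0, sumH u); [apply/factors_cons_none; left | rewrite addr0 uY].
  exists (z.1 - x, z.2); last by rewrite /= addrC subrK -surjective_pairing.
  by apply/factors_cons_none; right; apply/us/mapP; exists z.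
Qed.

Lemma mu_marked u :
  mu (synt_hom (ker_lang sumG)) (synt_hom (ker_lang sumH)) None u =
  Schutz (classG (sumG u)) (classH (sumH u))
    (fun z => exists2 z', factors u z' & z = (classG z'.1, classH z'.2)).
Proof.
have homG := synt_hom_ker sumG_cat letterGK.
have homH := synt_hom_ker sumH_cat letterHK.
rewrite /mu homG homH.
congr Schutz; apply: functional_extensionality => z.
apply: propositional_extensionality; split.
- case=> u' [u'' [Eu ->]]; exists (sumG u', sumH u''); first by exists u', u''.
  by rewrite homG homH.
- case=> _ [u' [u'' [-> ->]]] ->; exists u', u''; split=> //.
  by rewrite homG homH.
Qed.

Lemma mu_marked_surj
    (P : schutz (synt_monoid (ker_lang sumG)) (synt_monoid (ker_lang sumH))) :
  exists u, mu (synt_hom (ker_lang sumG)) (synt_hom (ker_lang sumH)) None u = P.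
Proof.
case: P => x y S.
have [X <-] := ker_class_surj sumG_cat letterGK x.
have [Y <-] := ker_class_surj sumH_cat letterHK y.
have [s sS] := exists_seq_pred (fun z : G * H => S (classG z.1, classH z.2)).
have [u [uX uY us]] := factors_realize s X Y.
exists u; rewrite mu_marked uX uY; congr Schutz.
apply: functional_extensionality => -[c d]; apply: propositional_extensionality.
have [g <-] := ker_class_surj sumG_cat letterGK c.
have [h <-] := ker_class_surj sumH_cat letterHK d.
split=> [[z /us /sS Sz ->] // | Sgh].
by exists (g, h); first exact/us/sS.
Qed.

End MarkedLetters.

Theorem proposition3 (m n : nat) (hm : 0 < m) (hn : 0 < n) :
  exists (A : finType) (a : A) (K L : lang A),
    has_card (synt_monoid K) m /\ has_card (synt_monoid L) n /\
    (forall P : schutz (synt_monoid K) (synt_monoid L),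
       exists u : seq A, mu (synt_hom K) (synt_hom L) a u = P).
Proof.
case: m hm => // p _; case: n hn => // q _.
have card_ord k : has_card 'I_k k by exists id; exists id.
exists (option ('I_p.+1 * 'I_q.+1)), None,
  (ker_lang (@sumG 'I_p.+1 'I_q.+1)), (ker_lang (@sumH 'I_p.+1 'I_q.+1)).
split; [|split; last exact: mu_marked_surj].
- exact: (has_card_synt_ker (@sumG_cat _ _) (@letterGK _ _)) (card_ord _).
- exact: (has_card_synt_ker (@sumH_cat _ _) (@letterHK _ _)) (card_ord _).
Qed.
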